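(* For $n\in\mathbb{N}$ and $M\in\mathbb{N}_0$, \[ \frac{2\pi}{12n-1}\sum_{k\ge M+1}\frac{\left|A_k^{[2]}(n,0)\right|}{k}I_2\left(\frac{\pi\sqrt{12n-1}}{3k}\right)\le f_M(n). \]
   Context: $I_2$ is the modified Bessel function of the first kind of order $2$. For $k\in\mathbb{N}$ and $0\le h<k$ with $\gcd(h,k)=1$, let $h'$ be an inverse of $h$ modulo $k$, and let $s(h,k):=\sum_{j=1}^{k-1}\left(\frac jk-\frac12\right)\left(\frac{hj}{k}-\left\lfloor\frac{hj}{k}\right\rfloor-\frac12\right)$ be the Dedekind sum. For integers $n,m$ define $A_k^{[2]}(n,m):=\sum_{0\le h<k,\ \gcd(h,k)=1}e^{2\pi i s(h,k)+\frac{2\pi i}{k}(nh+mh')}$. Finally \[ f_M(n):=\frac{\pi^5}{108}+\delta_{M\le\frac{\pi\sqrt{12n-1}}{3}-1}\frac{2\sqrt{6(M+1)}}{(12n-1)^{5/4}}\left(\frac{\pi\sqrt{12n-1}}{3}-M\right)e^{\frac{\pi\sqrt{12n-1}}{3(M+1)}}, \] where $\delta_S=1$ if the statement $S$ holds and $0$ otherwise. *)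

From Stdlib Require Import Reals Lra Lia ZArith Arith List.
From Coquelicot Require Import Coquelicot.
Open Scope R_scope.

Definition I2 (x : R) : R :=
  Series (fun m : nat => (x / 2) ^ (2 * m + 2) / (INR (fact m) * INR (fact (m + 2)))).

(* Floor of a real: Int_part x = up x - 1 is the floor. *)
Definition frac_part (x : R) : R := x - IZR (Int_part x).

Definition dedekind_s (h k : nat) : R :=
  fold_right Rplus 0
    (map (fun j : nat =>
            (INR j / INR k - 1 / 2) *
            (frac_part (INR h * INR j / INR k) - 1 / 2))
         (seq 1 (k - 1))).

(* An inverse h' of h modulo k, chosen in [0,k) (the least one); for k = 1 it is 0. *)
Definition inv_mod (h k : nat) : nat :=
  match find (fun j => Nat.eqb ((h * j) mod k) (1 mod k)) (seq 0 k) with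
  | Some j => j
  | None => 0%nat
  end.

Definition cexpi (t : R) : C := (cos t, sin t).

Definition A2 (k : nat) (n m : Z) : C :=
  fold_right Cplus (RtoC 0)
    (map (fun h : nat =>
            cexpi (2 * PI * dedekind_s h k
                   + 2 * PI / INR k * (IZR n * INR h + IZR m * INR (inv_mod h k))))
         (filter (fun h => Nat.eqb (Nat.gcd h k) 1) (seq 0 k))).

Definition fM (M n : nat) : R :=
  let X := 12 * INR n - 1 in
  PI ^ 5 / 108 +
  (if Rle_dec (INR M) (PI * sqrt X / 3 - 1)
   then 2 * sqrt (6 * (INR M + 1)) / Rpower X (5 / 4)
        * (PI * sqrt X / 3 - INR M)
        * exp (PI * sqrt X / (3 * (INR M + 1)))
   else 0).

Definition term6p2 (n k : nat) : R :=
  Cmod (A2 k (Z.of_nat n) 0) / INR k * I2 (PI * sqrt (12 * INR n - 1) / (3 * INR k)).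

(** Since [A_k^{[2]}(n,0)] is a sum of at most [k] unimodular terms, the [k]-th term is at
    most [I_2(c/k)] with [c = pi sqrt(12n-1)/3].  For [k > c] the argument is at most [1],
    where [I_2(x) <= x^2/6]; with [sum 1/k^2 <= 2] these terms contribute at most
    [2 pi^3/27 <= pi^5/108].  The at most [c - M] terms with [M < k <= c] are bounded by
    [I_2(y) <= e^y/(2 sqrt y)], [y = c/(M+1)], obtained by comparing the series of [I_2]
    termwise with consecutive pairs of terms of the exponential series, via AM-GM and the
    central binomial estimate [binom(2n,n) <= 4^n/sqrt(3n+1)]. *)

From Stdlib Require Import Reals Lra Lia Arith List.
From Coquelicot Require Import Coquelicot.
Open Scope R_scope.

Lemma ex_series_le_of_partial_sums (a : nat -> R) (L : R) :
  (forall n, 0 <= a n) -> (forall N, sum_f_R0 a N <= L) ->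
  ex_series a /\ Series a <= L.
Proof.
  intros a_ge0 sum_le.
  assert (grow : Un_growing (sum_f_R0 a)) by (intro N; simpl; specialize (a_ge0 (S N)); lra).
  assert (ub : has_ub (sum_f_R0 a)) by (exists L; intros x [N ->]; apply sum_le).
  destruct (growing_cv _ grow ub) as [l cv].
  assert (a_l : is_series a l) by (apply is_series_Reals; exact cv).
  split; [now exists l |].
  rewrite (is_series_unique _ _ a_l).
  apply (Rle_cv_lim (Un := sum_f_R0 a) (Vn := fun _ => L) sum_le cv).
  intros eps eps_gt0. exists 0%nat. intros. unfold Rdist. rewrite Rminus_diag_eq, Rabs_R0; auto.
Qed.

Lemma sum_f_R0_mult_l (x : R) (A : nat -> R) (N : nat) :
  sum_f_R0 (fun i => x * A i) N = x * sum_f_R0 A N.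
Proof. induction N as [|N IH]; simpl; [|rewrite IH]; ring. Qed.

Lemma sum_f_R0_pairs (e : nat -> R) (N : nat) :
  sum_f_R0 (fun m => e (2 * m + 2)%nat + e (2 * m + 3)%nat) N + e 0%nat + e 1%nat
  = sum_f_R0 e (2 * N + 3).
Proof.
  induction N as [|N IH]; [simpl; ring|].
  replace (2 * S N + 3)%nat with (S (S (2 * N + 3))) by lia.
  rewrite !tech5, <- IH.
  replace (S (2 * N + 3)) with (2 * S N + 2)%nat by lia.
  replace (S (2 * S N + 2)) with (2 * S N + 3)%nat by lia. ring.
Qed.

Lemma sum_inv_sqr_le (N : nat) :
  sum_f_R0 (fun j => / (INR j + 1) ^ 2) N <= 2 - 2 / (INR N + 2).
Proof.
  induction N as [|N IH]; [simpl; lra|].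
  rewrite tech5, S_INR.
  pose proof (pos_INR N).
  set (u := INR N + 2) in *.
  assert (u_ge2 : 2 <= u) by (unfold u; lra).
  replace (INR N + 1 + 1) with u by (unfold u; ring).
  replace (INR N + 1 + 2) with (u + 1) by (unfold u; ring).
  assert (telescope : 2 / u - 2 / (u + 1) = / (u * (u + 1) / 2)) by (field; lra).
  assert (/ u ^ 2 <= / (u * (u + 1) / 2)) by (apply Rinv_le_contravar; nra).
  lra.
Qed.

Lemma two_sqrt_mul_le_add (d y : R) : 0 <= d -> 0 <= y -> 2 * sqrt d * sqrt y <= d + y.
Proof.
  intros d_ge0 y_ge0.
  pose proof (sqrt_sqrt d d_ge0). pose proof (sqrt_sqrt y y_ge0).
  pose proof (pow2_ge_0 (sqrt d - sqrt y)). nra.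
Qed.

Lemma INR_fact_ge_1 (m : nat) : 1 <= INR (fact m).
Proof. apply (le_INR 1). pose proof (lt_O_fact m). lia. Qed.

Lemma INR_fact_add2_ge_2 (m : nat) : 2 <= INR (fact (m + 2)).
Proof.
  apply (le_INR 2).
  replace (m + 2)%nat with (S (S m)) by lia. rewrite !fact_simpl.
  pose proof (lt_O_fact m). nia.
Qed.

Definition I2_term (x : R) (m : nat) : R :=
  (x / 2) ^ (2 * m + 2) / (INR (fact m) * INR (fact (m + 2))).

Lemma I2_Series (x : R) : I2 x = Series (I2_term x).
Proof. reflexivity. Qed.

Lemma I2_term_ge0 (x : R) (m : nat) : 0 <= x -> 0 <= I2_term x m.
Proof.
  intros x_ge0. unfold I2_term. apply Rdiv_le_0_compat.
  - apply pow_le. lra.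
  - pose proof (INR_fact_ge_1 m). pose proof (INR_fact_add2_ge_2 m). nra.
Qed.

Lemma I2_term_le_compat (x y : R) (m : nat) : 0 <= x <= y -> I2_term x m <= I2_term y m.
Proof.
  intros xy. unfold I2_term, Rdiv. apply Rmult_le_compat_r.
  - left. apply Rinv_0_lt_compat.
    pose proof (INR_fact_ge_1 m). pose proof (INR_fact_add2_ge_2 m). nra.
  - apply pow_incr. lra.
Qed.

Lemma I2_term_le_geom (x : R) (m : nat) : 0 <= x <= 1 -> I2_term x m <= x ^ 2 / 8 * (1 / 4) ^ m.
Proof.
  intros x_01. unfold I2_term.
  replace (2 * m + 2)%nat with (2 * (m + 1))%nat by lia.
  rewrite pow_mult, pow_add, pow_1.
  set (z := (x / 2) ^ 2).
  assert (z_bounds : 0 <= z <= 1 / 4) by (unfold z; split; nra).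
  assert (zm_le : z ^ m <= (1 / 4) ^ m) by (apply pow_incr; lra).
  assert (zm_ge0 : 0 <= z ^ m) by (apply pow_le; lra).
  pose proof (INR_fact_ge_1 m). pose proof (INR_fact_add2_ge_2 m).
  apply (Rle_trans _ (z ^ m * z / 2)).
  - unfold Rdiv. apply Rmult_le_compat_l; [nra|]. apply Rinv_le_contravar; nra.
  - replace (x ^ 2 / 8 * (1 / 4) ^ m) with ((1 / 4) ^ m * z / 2) by (unfold z; field).
    unfold Rdiv. apply Rmult_le_compat_r; [lra|]. apply Rmult_le_compat_r; lra.
Qed.

Lemma I2_le_sqr (x : R) : 0 <= x <= 1 -> ex_series (I2_term x) /\ I2 x <= x ^ 2 / 6.
Proof.
  intros x_01. rewrite I2_Series. apply ex_series_le_of_partial_sums.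
  - intros; apply I2_term_ge0; lra.
  - intro N. apply (Rle_trans _ (sum_f_R0 (fun m => x ^ 2 / 8 * (1 / 4) ^ m) N)).
    + apply sum_Rle. intros; apply I2_term_le_geom; auto.
    + rewrite sum_f_R0_mult_l, tech3 by lra.
      assert (0 <= (1 / 4) ^ S N) by (apply pow_le; lra).
      assert (0 <= x ^ 2) by nra.
      replace (x ^ 2 / 6) with (x ^ 2 / 8 * (4 / 3)) by field.
      apply Rmult_le_compat_l; [lra|].
      apply (Rmult_le_reg_r (1 - 1 / 4)); [lra|]. field_simplify; lra.
Qed.

Definition exp_term (y : R) (i : nat) : R := / INR (fact i) * y ^ i.

Lemma sum_exp_term_le_exp (y : R) (N : nat) : 0 <= y -> sum_f_R0 (exp_term y) N <= exp y.
Proof.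
  intros y_ge0. unfold exp. destruct (exist_exp y) as [l cv]. simpl.
  apply sum_incr; [exact cv|]. intros i.
  apply Rmult_le_pos; [left; apply Rinv_0_lt_compat, INR_fact_lt_0 | apply pow_le; lra].
Qed.

Definition I2_denom (m : nat) : R := 4 ^ (m + 1) * INR (fact m) * INR (fact (m + 2)).

Lemma I2_denom_gt0 (m : nat) : 0 < I2_denom m.
Proof.
  unfold I2_denom. pose proof (INR_fact_ge_1 m). pose proof (INR_fact_add2_ge_2 m).
  assert (0 < 4 ^ (m + 1)) by (apply pow_lt; lra).
  repeat apply Rmult_lt_0_compat; lra.
Qed.

Lemma I2_denom_S (m : nat) : I2_denom (S m) = 4 * (INR m + 1) * (INR m + 3) * I2_denom m.
Proof.
  unfold I2_denom. replace (S m + 2)%nat with (S (m + 2)) by lia.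
  replace (S m + 1)%nat with (S (m + 1)) by lia.
  rewrite !fact_simpl, !mult_INR, !S_INR, plus_INR. simpl pow. simpl (INR 2). ring.
Qed.

Lemma INR_fact_double_S (m : nat) :
  INR (fact (2 * S m + 2)) = (2 * INR m + 4) * (2 * INR m + 3) * INR (fact (2 * m + 2)).
Proof.
  replace (2 * S m + 2)%nat with (S (S (2 * m + 2))) by lia.
  rewrite !fact_simpl, !mult_INR, !S_INR, plus_INR, mult_INR. simpl (INR 2). ring.
Qed.

(* [(2m+2)! / I2_denom m = binom(2m+2, m+1) / 4^(m+1) * (m+1)/(m+2)], so this is the
   central binomial estimate [binom(2n, n) <= 4^n / sqrt(3n+1)] at [n = m + 1]. *)
Lemma central_binomial_bound (m : nat) :
  INR (fact (2 * m + 2)) ^ 2 * (INR m + 2) ^ 2 * (3 * INR m + 4)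
  <= (INR m + 1) ^ 2 * I2_denom m ^ 2.
Proof.
  induction m as [|m IH]; [unfold I2_denom; simpl; lra|].
  rewrite INR_fact_double_S, I2_denom_S, S_INR.
  set (p := INR (fact (2 * m + 2)) ^ 2) in *. set (q := I2_denom m ^ 2) in *.
  set (u := INR m) in *.
  assert (u_ge0 : 0 <= u) by apply pos_INR.
  assert (p_ge0 : 0 <= p) by (unfold p; apply pow2_ge_0).
  assert (step : (2 * u + 3) ^ 2 * (3 * u + 7) * p <= 4 * (u + 1) ^ 2 * q).
  { assert ((2 * u + 3) ^ 2 * (3 * u + 7) <= 4 * (u + 2) ^ 2 * (3 * u + 4)) by nra. nra. }
  replace (((2 * u + 4) * (2 * u + 3) * INR (fact (2 * m + 2))) ^ 2 * (u + 1 + 2) ^ 2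
           * (3 * (u + 1) + 4))
    with (4 * (u + 2) ^ 2 * (u + 3) ^ 2 * ((2 * u + 3) ^ 2 * (3 * u + 7) * p)) by (unfold p; ring).
  replace ((u + 1 + 1) ^ 2 * (4 * (u + 1) * (u + 3) * I2_denom m) ^ 2)
    with (4 * (u + 2) ^ 2 * (u + 3) ^ 2 * (4 * (u + 1) ^ 2 * q)) by (unfold q; ring).
  apply Rmult_le_compat_l; [nra | exact step].
Qed.

Lemma INR_fact_double_mul_sqrt_le (m : nat) :
  INR (fact (2 * m + 2)) * sqrt (2 * INR m + 3) <= I2_denom m.
Proof.
  pose proof (central_binomial_bound m) as bound. pose proof (pos_INR m).
  pose proof (INR_fact_lt_0 (2 * m + 2)). pose proof (I2_denom_gt0 m).
  set (F := INR (fact (2 * m + 2))) in *. set (D := I2_denom m) in *.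
  assert (sqr_le : F ^ 2 * (2 * INR m + 3) <= D ^ 2).
  { apply (Rmult_le_reg_r ((INR m + 2) ^ 2)); [nra|].
    assert (F ^ 2 * (INR m + 2) ^ 2 * (3 * INR m + 4) <= D ^ 2 * (INR m + 2) ^ 2).
    { eapply Rle_trans; [exact bound|]. rewrite Rmult_comm.
      apply Rmult_le_compat_l; [nra | nra]. }
    nra. }
  rewrite <- (sqrt_pow2 D), <- (sqrt_pow2 F) by lra.
  rewrite <- sqrt_mult by nra. apply sqrt_le_1_alt. exact sqr_le.
Qed.

Lemma I2_term_eq (y : R) (m : nat) : I2_term y m = y ^ (2 * m + 2) / I2_denom m.
Proof.
  unfold I2_term, I2_denom.
  replace ((y / 2) ^ (2 * m + 2)) with (y ^ (2 * m + 2) / 4 ^ (m + 1)).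
  - pose proof (INR_fact_ge_1 m). pose proof (INR_fact_add2_ge_2 m).
    field. repeat split; try lra. apply pow_nonzero. lra.
  - replace (2 * m + 2)%nat with (2 * (m + 1))%nat by lia.
    rewrite !pow_mult. replace ((y / 2) ^ 2) with (y ^ 2 * / 4) by field.
    rewrite Rpow_mult_distr, pow_inv. reflexivity.
Qed.

Lemma exp_term_S (y : R) (i : nat) : exp_term y (S i) = exp_term y i * y / INR (S i).
Proof.
  unfold exp_term. rewrite fact_simpl, mult_INR, <- tech_pow_Rmult.
  pose proof (INR_fact_lt_0 i). pose proof (lt_0_INR (S i) (Nat.lt_0_succ i)).
  field. split; lra.
Qed.

Lemma I2_term_le_exp_terms (y : R) (m : nat) : 0 < y ->
  I2_term y m <= (exp_term y (2 * m + 2) + exp_term y (2 * m + 3)) / (2 * sqrt y).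
Proof.
  intros y_gt0.
  pose proof (INR_fact_double_mul_sqrt_le m) as F_le_D.
  pose proof (INR_fact_lt_0 (2 * m + 2)) as F_gt0. pose proof (pos_INR m).
  pose proof (I2_denom_gt0 m).
  assert (Y_gt0 : 0 < y ^ (2 * m + 2)) by (apply pow_lt; lra).
  replace (2 * m + 3)%nat with (S (2 * m + 2)) by lia.
  rewrite I2_term_eq, exp_term_S.
  replace (INR (S (2 * m + 2))) with (2 * INR m + 3)
    by (rewrite S_INR, plus_INR, mult_INR; simpl; ring).
  unfold exp_term.
  set (F := INR (fact (2 * m + 2))) in *. set (d := 2 * INR m + 3) in *.
  set (Y := y ^ (2 * m + 2)) in *.
  replace (/ F * Y) with (Y / F) by (unfold Rdiv; ring).
  assert (d_gt0 : 0 < d) by (unfold d; lra).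
  assert (s_gt0 : 0 < sqrt d) by (apply sqrt_lt_R0; lra).
  assert (t_gt0 : 0 < sqrt y) by (apply sqrt_lt_R0; lra).
  pose proof (sqrt_sqrt d ltac:(lra)) as ss.
  pose proof (two_sqrt_mul_le_add d y ltac:(lra) ltac:(lra)) as am_gm.
  set (s := sqrt d) in *. set (t := sqrt y) in *.
  apply (Rle_trans _ (Y / F * / s)).
  - replace (Y / F * / s) with (Y / (F * s)) by (field; lra).
    unfold Rdiv. apply Rmult_le_compat_l; [lra|]. apply Rinv_le_contravar; nra.
  - replace ((Y / F + Y / F * y / d) / (2 * t)) with (Y / F * ((d + y) / (2 * d * t)))
      by (field; lra).
    apply Rmult_le_compat_l; [apply Rdiv_le_0_compat; lra|].
    replace (/ s) with (2 * s * t / (2 * d * t)) by (rewrite <- ss; field; lra).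
    unfold Rdiv. apply Rmult_le_compat_r; [|exact am_gm].
    left. apply Rinv_0_lt_compat. nra.
Qed.

Lemma I2_le_exp (y : R) : 0 < y -> ex_series (I2_term y) /\ I2 y <= exp y / (2 * sqrt y).
Proof.
  intros y_gt0. rewrite I2_Series. apply ex_series_le_of_partial_sums.
  - intros; apply I2_term_ge0; lra.
  - intro N.
    assert (t_gt0 : 0 < sqrt y) by (apply sqrt_lt_R0; lra).
    apply (Rle_trans _ (sum_f_R0 (fun m => / (2 * sqrt y)
                         * (exp_term y (2 * m + 2) + exp_term y (2 * m + 3))) N)).
    + apply sum_Rle. intros m _. rewrite Rmult_comm. apply I2_term_le_exp_terms, y_gt0.
    + rewrite sum_f_R0_mult_l. unfold Rdiv. rewrite (Rmult_comm (exp y)).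
      apply Rmult_le_compat_l; [left; apply Rinv_0_lt_compat; lra|].
      pose proof (sum_f_R0_pairs (exp_term y) N).
      pose proof (sum_exp_term_le_exp y (2 * N + 3) ltac:(lra)).
      assert (0 <= exp_term y 0 /\ 0 <= exp_term y 1) by (unfold exp_term; simpl; split; nra).
      lra.
Qed.

Lemma I2_ge0 (x : R) : 0 < x -> 0 <= I2 x.
Proof.
  intros x_gt0. destruct (I2_le_exp x x_gt0) as [summable _].
  pose proof (proj1 (is_series_Reals _ _) (Series_correct _ summable)) as cv.
  rewrite I2_Series. apply (Rle_trans _ (sum_f_R0 (I2_term x) 0)).
  - apply I2_term_ge0. lra.
  - apply sum_incr; [exact cv | intros; apply I2_term_ge0; lra].
Qed.

Lemma I2_le_compat (x y : R) : 0 <= x <= y -> 0 < y -> I2 x <= I2 y.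
Proof.
  intros xy y_gt0. destruct (I2_le_exp y y_gt0) as [summable _]. rewrite !I2_Series.
  apply Series_le; [|exact summable].
  intros; split; [apply I2_term_ge0 | apply I2_term_le_compat]; lra.
Qed.

Lemma I2_div_le_sqr (c k : R) : 0 < c <= k -> I2 (c / k) <= c ^ 2 / 6 / k ^ 2.
Proof.
  intros ck.
  assert (x_01 : 0 <= c / k <= 1).
  { split; [apply Rdiv_le_0_compat; lra|].
    apply (Rmult_le_reg_r k); [lra|]. unfold Rdiv. rewrite Rmult_assoc, Rinv_l; lra. }
  destruct (I2_le_sqr (c / k) x_01) as [_ bound].
  replace (c ^ 2 / 6 / k ^ 2) with ((c / k) ^ 2 / 6) by (field; lra). exact bound.
Qed.

Lemma I2_div_le_exp (c k : R) (M : nat) : 0 < c -> INR M + 1 <= k ->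
  I2 (c / k) <= exp (c / (INR M + 1)) / (2 * sqrt (c / (INR M + 1))).
Proof.
  intros c_gt0 k_ge. pose proof (pos_INR M).
  assert (y_gt0 : 0 < c / (INR M + 1)) by (apply Rdiv_lt_0_compat; lra).
  eapply Rle_trans; [|apply (I2_le_exp _ y_gt0)].
  apply I2_le_compat; [|exact y_gt0]. split.
  - apply Rdiv_le_0_compat; lra.
  - unfold Rdiv. apply Rmult_le_compat_l; [lra|]. apply Rinv_le_contravar; lra.
Qed.

Definition head_indicator (M : nat) (c : R) (j : nat) : R :=
  if Rle_dec (INR (j + M + 1)) c then 1 else 0.

Lemma head_indicator_cases (M : nat) (c : R) (j : nat) :
  (INR j + INR M + 1 <= c /\ head_indicator M c j = 1)
  \/ (c < INR j + INR M + 1 /\ head_indicator M c j = 0).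
Proof.
  unfold head_indicator. rewrite !plus_INR. simpl (INR 1).
  destruct Rle_dec; [left | right]; split; auto; lra.
Qed.

Lemma sum_head_indicator_le (M : nat) (c : R) (N : nat) :
  sum_f_R0 (head_indicator M c) N <= if Rle_dec (INR M) (c - 1) then c - INR M else 0.
Proof.
  destruct Rle_dec as [head | no_head].
  - enough (sum_f_R0 (head_indicator M c) N <= INR (S N)
            /\ sum_f_R0 (head_indicator M c) N <= c - INR M) by tauto.
    induction N as [|N IH]; simpl sum_f_R0.
    + destruct (head_indicator_cases M c 0) as [[h ->] | [h ->]]; simpl in *; lra.
    + destruct (head_indicator_cases M c (S N)) as [[h ->] | [h ->]];
        rewrite !S_INR in *; lra.
  - rewrite (sum_eq _ (fun _ => 0)), sum_cte; [lra|].
    intros j _. pose proof (pos_INR j).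
    destruct (head_indicator_cases M c j) as [[h _] | [_ ->]]; lra.
Qed.

Lemma series_I2_tail_le (a : nat -> R) (c : R) (M : nat) : 0 < c ->
  (forall j, 0 <= a j <= I2 (c / INR (j + M + 1))) ->
  ex_series a /\
  Series a <= c ^ 2 / 3 + exp (c / (INR M + 1)) / (2 * sqrt (c / (INR M + 1)))
                          * (if Rle_dec (INR M) (c - 1) then c - INR M else 0).
Proof.
  intros c_gt0 a_bounds. pose proof (pos_INR M).
  set (B := exp (c / (INR M + 1)) / (2 * sqrt (c / (INR M + 1)))).
  assert (B_ge0 : 0 <= B).
  { apply Rdiv_le_0_compat; [left; apply exp_pos|].
    enough (0 < sqrt (c / (INR M + 1))) by lra.
    apply sqrt_lt_R0, Rdiv_lt_0_compat; lra. }
  assert (a_le : forall j, a j <= B * head_indicator M c j + c ^ 2 / 6 * / (INR j + 1) ^ 2).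
  { intro j. pose proof (pos_INR j). destruct (a_bounds j) as [a_ge0 a_le_I2].
    rewrite plus_INR, plus_INR in a_le_I2. simpl (INR 1) in a_le_I2.
    assert (tail_ge0 : 0 <= c ^ 2 / 6 * / (INR j + 1) ^ 2).
    { apply Rmult_le_pos; [nra|]. left. apply Rinv_0_lt_compat. nra. }
    destruct (head_indicator_cases M c j) as [[head ->] | [tail ->]].
    - enough (a j <= B) by nra.
      eapply Rle_trans; [exact a_le_I2|]. apply I2_div_le_exp; lra.
    - rewrite Rmult_0_r, Rplus_0_l. eapply Rle_trans; [exact a_le_I2|].
      eapply Rle_trans; [apply I2_div_le_sqr; lra|].
      unfold Rdiv. apply Rmult_le_compat_l; [nra|]. apply Rinv_le_contravar; nra. }
  apply ex_series_le_of_partial_sums; [intro j; apply a_bounds|].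
  intro N. eapply Rle_trans; [apply sum_Rle; intros j _; apply a_le|].
  rewrite plus_sum, !sum_f_R0_mult_l.
  pose proof (sum_inv_sqr_le N). pose proof (pos_INR N).
  assert (0 < 2 / (INR N + 2)) by (apply Rdiv_lt_0_compat; lra).
  pose proof (sum_head_indicator_le M c N).
  assert (B * sum_f_R0 (head_indicator M c) N
          <= B * (if Rle_dec (INR M) (c - 1) then c - INR M else 0))
    by (apply Rmult_le_compat_l; assumption).
  assert (c ^ 2 / 6 * sum_f_R0 (fun j => / (INR j + 1) ^ 2) N <= c ^ 2 / 6 * 2)
    by (apply Rmult_le_compat_l; nra).
  lra.
Qed.

Lemma Cmod_cexpi (t : R) : Cmod (cexpi t) = 1.
Proof.
  unfold Cmod, cexpi; simpl.
  replace (cos t * (cos t * 1) + sin t * (sin t * 1)) with 1; [apply sqrt_1|].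
  pose proof (sin2_cos2 t). unfold Rsqr in *. lra.
Qed.

Lemma Cmod_fold_Cplus_le (f : nat -> C) (l : list nat) :
  (forall h, Cmod (f h) <= 1) ->
  Cmod (fold_right Cplus (RtoC 0) (map f l)) <= INR (length l).
Proof.
  intros f_le. induction l as [|h l IH]; cbn [fold_right map length].
  - rewrite Cmod_0. simpl. lra.
  - eapply Rle_trans; [apply Cmod_triangle|]. rewrite S_INR. specialize (f_le h). lra.
Qed.

Lemma Cmod_A2_le (k : nat) (n m : Z) : Cmod (A2 k n m) <= INR k.
Proof.
  unfold A2. eapply Rle_trans.
  - apply Cmod_fold_Cplus_le. intros; rewrite Cmod_cexpi; lra.
  - apply le_INR. rewrite <- (length_seq k 0) at 2. apply filter_length_le.
Qed.

Lemma term6p2_bounds (n k : nat) : (1 <= n)%nat -> (1 <= k)%nat ->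
  0 <= term6p2 n k <= I2 (PI * sqrt (12 * INR n - 1) / 3 / INR k).
Proof.
  intros n_ge1 k_ge1. unfold term6p2.
  apply (le_INR 1) in n_ge1, k_ge1. simpl in n_ge1, k_ge1.
  replace (PI * sqrt (12 * INR n - 1) / (3 * INR k))
    with (PI * sqrt (12 * INR n - 1) / 3 / INR k) by (field; lra).
  set (x := PI * sqrt (12 * INR n - 1) / 3 / INR k).
  assert (x_gt0 : 0 < x).
  { unfold x. pose proof PI_RGT_0. pose proof (sqrt_lt_R0 (12 * INR n - 1) ltac:(lra)).
    repeat apply Rdiv_lt_0_compat; nra. }
  pose proof (I2_ge0 x x_gt0). pose proof (Cmod_A2_le k (Z.of_nat n) 0).
  pose proof (Cmod_ge_0 (A2 k (Z.of_nat n) 0)).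
  assert (0 <= Cmod (A2 k (Z.of_nat n) 0) / INR k <= 1).
  { split; [apply Rdiv_le_0_compat; lra|].
    apply (Rmult_le_reg_r (INR k)); [lra|]. unfold Rdiv. rewrite Rmult_assoc, Rinv_l; lra. }
  split; nra.
Qed.

Lemma PI_sqr_ge_8 : 8 <= PI ^ 2.
Proof. pose proof (PI_ineq 1) as [H _]. unfold tg_alt, PI_tg in H. simpl in H. nra. Qed.

Lemma tail_prefactor_le (X : R) :
  0 < X -> 2 * PI / X * ((PI * sqrt X / 3) ^ 2 / 3) <= PI ^ 5 / 108.
Proof.
  intros X_gt0. pose proof PI_sqr_ge_8. pose proof PI_RGT_0.
  replace (2 * PI / X * ((PI * sqrt X / 3) ^ 2 / 3))
    with (2 * PI ^ 3 / 27 * (sqrt X * sqrt X / X)) by (field; lra).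
  rewrite sqrt_sqrt, Rdiv_diag by lra.
  assert (0 < PI ^ 3) by (apply pow_lt; lra).
  replace (PI ^ 5) with (PI ^ 3 * PI ^ 2) by ring. nra.
Qed.

Lemma head_prefactor_le (X m : R) : 0 < X -> 0 <= m ->
  2 * PI / X * / (2 * sqrt (PI * sqrt X / 3 / (m + 1)))
  <= 2 * sqrt (6 * (m + 1)) / Rpower X (5 / 4).
Proof.
  intros X_gt0 m_ge0. pose proof PI_RGT_0. pose proof PI_4.
  set (q := Rpower X (1 / 4)).
  assert (q_gt0 : 0 < q) by (unfold q, Rpower; apply exp_pos).
  assert (qq : q * q = sqrt X).
  { unfold q. rewrite <- Rpower_plus. replace (1 / 4 + 1 / 4) with (/ 2) by field.
    apply Rpower_sqrt. lra. }
  assert (X_pow : Rpower X (5 / 4) = X * q).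
  { unfold q. replace (5 / 4) with (1 + 1 / 4) by field.
    rewrite Rpower_plus, Rpower_1 by lra. ring. }
  rewrite X_pow, <- qq.
  set (y := PI * (q * q) / 3 / (m + 1)).
  assert (y_gt0 : 0 < y).
  { unfold y. pose proof (Rmult_lt_0_compat _ _ q_gt0 q_gt0).
    repeat apply Rdiv_lt_0_compat; try apply Rmult_lt_0_compat; lra. }
  assert (sqrt_y_gt0 : 0 < sqrt y) by (apply sqrt_lt_R0; lra).
  assert (sqrt_prod : sqrt (6 * (m + 1)) * sqrt y = sqrt (2 * PI) * q).
  { rewrite <- sqrt_mult by lra.
    replace (6 * (m + 1) * y) with (2 * PI * (q * q)) by (unfold y; field; lra).
    rewrite sqrt_mult, sqrt_square by nra. reflexivity. }
  assert (PI / 2 <= sqrt (2 * PI)).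
  { rewrite <- (sqrt_pow2 (PI / 2)) by lra. apply sqrt_le_1_alt. nra. }
  set (A := sqrt (6 * (m + 1))) in *. set (Y := sqrt y) in *.
  assert (diff : 2 * A / (X * q) - 2 * PI / X * / (2 * Y) = (2 * (A * Y) - PI * q) / (X * q * Y))
    by (field; repeat split; lra).
  assert (0 <= (2 * (A * Y) - PI * q) / (X * q * Y)).
  { apply Rdiv_le_0_compat; [rewrite sqrt_prod; nra|]. apply Rmult_lt_0_compat; nra. }
  lra.
Qed.

Lemma head_contribution_le (X m h : R) : 0 < X -> 0 <= m -> 0 <= h ->
  2 * PI / X * (exp (PI * sqrt X / 3 / (m + 1)) / (2 * sqrt (PI * sqrt X / 3 / (m + 1))) * h)
  <= 2 * sqrt (6 * (m + 1)) / Rpower X (5 / 4) * h * exp (PI * sqrt X / (3 * (m + 1))).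
Proof.
  intros X_gt0 m_ge0 h_ge0.
  pose proof (head_prefactor_le X m X_gt0 m_ge0) as prefactor_le.
  replace (PI * sqrt X / (3 * (m + 1))) with (PI * sqrt X / 3 / (m + 1)) by (field; lra).
  set (y := PI * sqrt X / 3 / (m + 1)) in *.
  replace (2 * PI / X * (exp y / (2 * sqrt y) * h))
    with (2 * PI / X * / (2 * sqrt y) * (exp y * h)) by (unfold Rdiv; ring).
  replace (2 * sqrt (6 * (m + 1)) / Rpower X (5 / 4) * h * exp y)
    with (2 * sqrt (6 * (m + 1)) / Rpower X (5 / 4) * (exp y * h)) by ring.
  apply Rmult_le_compat_r; [|exact prefactor_le].
  pose proof (exp_pos y). nra.
Qed.

Theorem lemma6p2 (n M : nat) (hn : (1 <= n)%nat) :
  exists l : R,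
    is_series (fun j : nat => term6p2 n (j + M + 1)) l /\
    2 * PI / (12 * INR n - 1) * l <= fM M n.
Proof.
  set (X := 12 * INR n - 1).
  assert (X_gt0 : 0 < X) by (unfold X; apply (le_INR 1) in hn; simpl in hn; lra).
  set (c := PI * sqrt X / 3).
  assert (c_gt0 : 0 < c).
  { unfold c. pose proof PI_RGT_0. pose proof (sqrt_lt_R0 X X_gt0). nra. }
  destruct (series_I2_tail_le (fun j => term6p2 n (j + M + 1)) c M c_gt0)
    as [summable sum_le].
  { intro j. apply term6p2_bounds; lia. }
  exists (Series (fun j => term6p2 n (j + M + 1))). split; [now apply Series_correct|].
  assert (prefactor_gt0 : 0 < 2 * PI / X) by (pose proof PI_RGT_0; apply Rdiv_lt_0_compat; lra).
  eapply Rle_trans; [apply Rmult_le_compat_l; [lra | exact sum_le]|].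
  unfold fM. fold X c. rewrite Rmult_plus_distr_l.
  apply Rplus_le_compat; [apply tail_prefactor_le, X_gt0|].
  destruct Rle_dec as [head | _]; [|lra].
  apply head_contribution_le; [exact X_gt0 | apply pos_INR | lra].
Qed.
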